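(* Let $k$ be an odd positive integer. Then $$\sum_{n=1}^{k-1}\frac{\sin^2(\pi n/k)}{\sin^4(2\pi n/k)}=\frac{1}{48}\left(k^4+6k^2-7\right).$$ *)

From Stdlib Require Export Reals.

(* With t = tan^2 x one has sin^2 x / sin^4 (2x) = (1 + t)^3 / (16 t)
   = (t^2 + 3 t + 3 + 1/t) / 16.  Writing cos (k x) + i sin (k x) =
   cos^k x (1 + i tan x)^k gives sin (k x) = cos^k x tan x B_k(tan^2 x) with
   B_k(t) = sum_j (-1)^j C(k, 2j+1) t^j.  For k = 2m+1 the m numbers
   tan^2 (pi n / k), 1 <= n <= m, are distinct roots of B_k, which has degree m,
   so Vieta's formulas give sum t = C(k,2), sum t^2 = C(k,2)^2 - 2 C(k,4) and
   sum 1/t = C(k,3)/k.  Since the terms n and k - n of the sum coincide, the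
   sum is twice its first half, which evaluates to (k^4 + 6k^2 - 7)/48. *)
From Stdlib Require Import Reals.
From mathcomp Require Import all_boot all_order all_algebra.
From mathcomp Require Import Rstruct ring lra zify.

Set Implicit Arguments.
Unset Strict Implicit.
Unset Printing Implicit Defensive.

Import Order.TTheory GRing.Theory Num.Theory.

Local Open Scope ring_scope.

Lemma coef_XsubCM (R : nzRingType) (a : R) (p : {poly R}) i :
  (('X - a%:P) * p)`_i = (if i is j.+1 then p`_j else 0) - a * p`_i.
Proof. by rewrite mulrBl coefB coefXM coefCM; case: i. Qed.

Lemma coefPn2_prod_XsubC (R : comNzRingType) (rs : seq R) : (1 < size rs)%N ->
  (\prod_(r <- rs) ('X - r%:P))`_(size rs - 2) *+ 2 =
  (\sum_(r <- rs) r) ^+ 2 - \sum_(r <- rs) r ^+ 2.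
Proof.
case: rs => [|a [|b rs]] // _; rewrite subn2 /=.
elim: rs a b => [|c rs IH] a b.
  by rewrite !big_cons !big_nil mulr1 coef_XsubCM coefB coefX coefC /=; ring.
have e1 := @coefPn_prod_XsubC _ [:: b, c & rs] isT.
rewrite big_cons coef_XsubCM mulrnBl -mulrnAr IH /= e1 !big_cons; ring.
Qed.

Lemma coef1_prod_XsubC (F : fieldType) (rs : seq F) : 0 \notin rs ->
  (\prod_(r <- rs) ('X - r%:P))`_1 =
  - (\prod_(r <- rs) ('X - r%:P))`_0 * \sum_(r <- rs) r^-1.
Proof.
elim: rs => [|a rs IH]; first by rewrite !big_nil coefC mulr0.
rewrite inE negb_or eq_sym => /andP[a0 /IH {}IH].
by rewrite !big_cons !coef_XsubCM IH; field.
Qed.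

(* The pair (A_k, B_k) with (1 + i u)^k = A_k(u^2) + i u B_k(u^2). *)
Fixpoint multiple_angle_polys (R : nzRingType) (k : nat) : {poly R} * {poly R} :=
  if k is k'.+1 then
    let: (A, B) := multiple_angle_polys R k' in (A - 'X * B, B + A)
  else (1, 0).

Lemma coef_multiple_angle_polys (R : nzRingType) k j :
  (multiple_angle_polys R k).1`_j = (-1) ^+ j * 'C(k, j.*2)%:R /\
  (multiple_angle_polys R k).2`_j = (-1) ^+ j * 'C(k, j.*2.+1)%:R.
Proof.
elim: k j => [|k IH] j /=.
  by rewrite coefC coef0; case: j => [|j]; rewrite /= ?bin0n mulr0 ?mulr1.
case: (multiple_angle_polys R k) (IH) => A B /= {}IH.
rewrite coefB coefXM coefD; have [-> ->] := IH j.
split; last by rewrite binS natrD mulrDr addrC.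
case: j => [|j] /=; first by rewrite subr0 !bin0.
have [_ ->] := IH j.
by rewrite doubleS binS natrD exprS mulN1r !mulNr mulrDr opprD.
Qed.

Lemma multiple_angle_polysS (F : fieldType) k (c s : F) (c0 : c != 0) :
  let t := s / c in
  let A k := (multiple_angle_polys F k).1.[t ^+ 2] in
  let B k := (multiple_angle_polys F k).2.[t ^+ 2] in
  c ^+ k.+1 * A k.+1 = c ^+ k * A k * c - c ^+ k * t * B k * s /\
  c ^+ k.+1 * t * B k.+1 = c ^+ k * t * B k * c + c ^+ k * A k * s.
Proof.
move=> t A B; rewrite /A /B /=.
case: (multiple_angle_polys F k) => P Q /=.
rewrite hornerD hornerN hornerM hornerX hornerD exprS.
by split; rewrite /t; field.
Qed.

Lemma multiple_angle_tan (k : nat) (x : R) : cos x != 0 ->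
  cos (INR k * x) = cos x ^+ k * (multiple_angle_polys R k).1.[tan x ^+ 2] /\
  sin (INR k * x) = cos x ^+ k * tan x * (multiple_angle_polys R k).2.[tan x ^+ 2].
Proof.
move=> cx0; rewrite /tan RdivE.
elim: k => [|k [IHc IHs]]; first by rewrite Rmult_0_l cos_0 sin_0 !hornerE.
have [-> ->] := multiple_angle_polysS k (sin x) cx0.
by rewrite S_INR Rmult_plus_distr_r Rmult_1_l sinD cosD IHc IHs addrC.
Qed.

Lemma IZR2E : IZR 2 = 2%:R :> R.
Proof. by rewrite IZRposE INRE. Qed.

Lemma PI_gt0 : 0 < PI :> R.
Proof. exact/RltP/PI_RGT_0. Qed.

Section PIFractions.
Variable k : nat.
Let x n : R := PI * INR n / INR k.

Lemma PI_frac_bounds n : (0 < n)%N -> (n.*2 < k)%N -> 0 < x n < PI / 2.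
Proof.
move=> n0 nk; have pi0 := PI_gt0.
have k0 : 0 < k%:R :> R by rewrite ltr0n; apply: leq_ltn_trans nk.
have n0' : 0 < n%:R :> R by rewrite ltr0n.
have nk' : n%:R * 2 < k%:R :> R by rewrite -natrM ltr_nat muln2.
rewrite /x !INRE RdivE RmultE; apply/andP; split.
  by apply: divr_gt0 => //; apply: mulr_gt0.
rewrite ltr_pdivrMr //.
have : 0 < PI * (k%:R - n%:R * 2) by apply: mulr_gt0 => //; rewrite subr_gt0.
lra.
Qed.

Lemma PI_frac_trig_gt0 n : (0 < n)%N -> (n.*2 < k)%N ->
  [/\ 0 < sin (x n), 0 < cos (x n) & 0 < tan (x n)].
Proof.
move=> n0 nk; have /andP[x0 x1] := PI_frac_bounds n0 nk.
have pi0 := PI_gt0.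
have Rx0 : Rlt 0 (x n) by apply/RltP.
have Rx1 : Rlt (x n) (PI / 2) by apply/RltP; rewrite RdivE IZR2E.
split; apply/RltP; [apply: sin_gt_0 | apply: cos_gt_0 | exact: tan_gt_0] => //.
  by apply/RltP; lra.
by apply/RltP; rewrite RoppE RdivE IZR2E; lra.
Qed.

Lemma tan_PI_frac_inj n1 n2 : (0 < n1)%N -> (n1.*2 < k)%N -> (0 < n2)%N -> (n2.*2 < k)%N ->
  tan (x n1) = tan (x n2) -> n1 = n2.
Proof.
move=> n10 n1k n20 n2k.
have /andP[a0 a1] := PI_frac_bounds n10 n1k.
have /andP[b0 b1] := PI_frac_bounds n20 n2k.
have k0 : k%:R != 0 :> R by rewrite pnatr_eq0 -lt0n; apply: leq_ltn_trans n1k.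
have half_PI y : 0 < y -> y < PI / 2 -> Rlt (- PI / 2) y /\ Rlt y (PI / 2).
  by move=> y0 y1; split; apply/RltP; rewrite RdivE ?RoppE IZR2E; lra.
move/tan_inj => /(_ (half_PI _ a0 a1) (half_PI _ b0 b1)).
rewrite /x !INRE RdivE RmultE => /(mulIf (invr_neq0 k0)) /(mulfI (lt0r_neq0 PI_gt0)).
by move/eqP; rewrite eqr_nat => /eqP.
Qed.

Lemma root_tan2_PI_frac n : (0 < n)%N -> (n.*2 < k)%N ->
  root (multiple_angle_polys R k).2 (tan (x n) ^+ 2).
Proof.
move=> n0 nk; have [_ c0 t0] := PI_frac_trig_gt0 n0 nk.
have k0 : k%:R != 0 :> R by rewrite pnatr_eq0 -lt0n; apply: leq_ltn_trans nk.
have [_] := multiple_angle_tan k (lt0r_neq0 c0).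
have -> : Rmult (INR k) (x n) = Rmult (IZR (Z.of_nat n)) PI.
  by rewrite -INR_IZR_INZ /x !INRE RdivE !RmultE; field.
rewrite sin_eq_0_1; last by exists (Z.of_nat n).
move: (tan (x n)) t0 => t t0.
by move/esym/eqP; rewrite !mulf_eq0 expf_eq0 (gt_eqF c0) (gt_eqF t0) andbF.
Qed.
End PIFractions.

Definition sin_ratio (x : R) : R := sin x ^+ 2 / sin (2 * x) ^+ 4.

Lemma sin_ratio_PI_sub x : sin_ratio (PI - x) = sin_ratio x.
Proof.
rewrite /sin_ratio !sin_2a sin_PI_x Rtrigo_facts.cos_pi_minus !RmultE RoppE.
congr (_ / _); ring.
Qed.

Lemma sin_ratio_tan x : sin x != 0 -> cos x != 0 ->
  let t := tan x ^+ 2 in sin_ratio x = (t ^+ 2 + 3 * t + 3 + t^-1) / 16.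
Proof.
move=> s0 c0; rewrite /sin_ratio /tan sin_2a !RmultE IZR2E.
have := sin2_cos2 x; rewrite /Rsqr RplusE !RmultE -!expr2.
move: (sin x) (cos x) s0 c0 => s c s0 c0 pyth; rewrite !RdivE.
(* Homogenize, so that the identity becomes a rational-function identity. *)
have -> : s ^+ 2 = s ^+ 2 * (s ^+ 2 + c ^+ 2) ^+ 3 by rewrite pyth expr1n mulr1.
by field; rewrite s0 c0.
Qed.

Lemma sum_nat_reflect (V : nmodType) (g : nat -> V) m :
  (forall n, (0 < n <= m)%N -> g (m.*2.+1 - n)%N = g n) ->
  \sum_(1 <= n < m.*2.+1) g n = (\sum_(1 <= n < m.+1) g n) *+ 2.
Proof.
move=> gsym; rewrite (big_cat_nat _ (n := m.+1)) //=; last by rewrite ltnS -addnn leq_addl.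
rewrite mulr2n; congr (_ + _).
rewrite -{1}[m.+1]add1n big_addn big_nat_rev /=.
have -> : (m.*2.+1 - m = m.+1)%N by lia.
apply: eq_big_nat => n /andP[n0 nm].
have -> : (1 + m.+1 - n.+1 + m = m.*2.+1 - n)%N by lia.
by apply: gsym; rewrite n0 -ltnS.
Qed.

Lemma natr_bin_ffact (R : comPzRingType) n j :
  'C(n, j)%:R * j`!%:R = \prod_(i < j) (n%:R - i%:R) :> R.
Proof.
have [jn | nj] := leqP j n.
  rewrite -natrM bin_ffact ffact_prod natr_prod.
  by apply: eq_bigr => i _; rewrite natrB // ltnW // (leq_trans (ltn_ord i)).
by rewrite bin_small // mul0r (bigD1 (Ordinal nj)) //= subrr mul0r.
Qed.

Section OddMultiple.
Variable m : nat.
Hypothesis m_gt0 : (0 < m)%N.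
Let k := m.*2.+1.
Let B := (multiple_angle_polys R k).2.
Let t n := tan (PI * INR n / INR k) ^+ 2.
Let rs := [seq t n | n <- index_iota 1 m.+1].

Let coefB j : B`_j = (-1) ^+ j * 'C(k, j.*2.+1)%:R.
Proof. exact: (coef_multiple_angle_polys R k j).2. Qed.

Let size_rs : size rs = m.
Proof. by rewrite size_map size_iota subn1. Qed.

Let in_range n : (0 < n < m.+1)%N -> (0 < n)%N /\ (n.*2 < k)%N.
Proof. by case/andP=> n0 nm; split=> //; rewrite /k ltnS leq_double -ltnS. Qed.

Let rs_gt0 r : r \in rs -> 0 < r.
Proof.
case/mapP=> n; rewrite mem_index_iota => /in_range[n0 nk] ->.
by have [_ _ t0] := PI_frac_trig_gt0 n0 nk; rewrite exprn_gt0.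
Qed.

Lemma multiple_angle_sin_poly_prod : B = (-1) ^+ m *: \prod_(r <- rs) ('X - r%:P).
Proof.
have sizeB : size B = m.+1.
  have -> : B = \poly_(j < m.+1) ((-1) ^+ j * 'C(k, j.*2.+1)%:R).
    apply/polyP => j; rewrite coef_poly coefB; case: ltnP => // mj.
    by rewrite bin_small ?mulr0 // /k; lia.
  by apply: size_poly_eq; rewrite binn mulr1 signr_eq0.
have -> : (-1) ^+ m = lead_coef B by rewrite lead_coefE sizeB coefB binn mulr1.
apply: all_roots_prod_XsubC; first by rewrite sizeB size_rs.
  apply/allP => r /mapP[n]; rewrite mem_index_iota => /in_range[n0 nk] ->.
  exact: root_tan2_PI_frac.
rewrite uniq_rootsE map_inj_in_uniq ?iota_uniq // => n1 n2.
rewrite !mem_index_iota => /in_range[n10 n1k] /in_range[n20 n2k] /eqP.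
have [_ _ t1] := PI_frac_trig_gt0 n10 n1k; have [_ _ t2] := PI_frac_trig_gt0 n20 n2k.
by rewrite eqrXn2 ?ltW // => /eqP; apply: tan_PI_frac_inj.
Qed.

Let P := \prod_(r <- rs) ('X - r%:P).

Let coefBP j : B`_j = (-1) ^+ m * P`_j.
Proof. by rewrite {1}multiple_angle_sin_poly_prod coefZ. Qed.

Let sum_rs (F : R -> R) : \sum_(r <- rs) F r = \sum_(1 <= n < m.+1) F (t n).
Proof. exact: big_map. Qed.

Let sign_neq0 j : (-1) ^+ j != 0 :> R.
Proof. by rewrite signr_eq0. Qed.

Let signS : (-1) ^+ m = - (-1) ^+ m.-1 :> R.
Proof. by rewrite -{1}(prednK m_gt0) exprS mulN1r. Qed.

Lemma sum_tan2_PI_frac : \sum_(1 <= n < m.+1) t n = 'C(k, 2)%:R.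
Proof.
have := @coefPn_prod_XsubC _ rs; rewrite size_rs -lt0n sum_rs => /(_ m_gt0) e.
have := coefBP m.-1; rewrite coefB e signS mulrNN.
move/(mulfI (sign_neq0 _)) => <-.
have -> : (m.-1.*2.+1 = k - 2)%N by rewrite /k; lia.
by rewrite bin_sub // /k; lia.
Qed.

Lemma sum_tan4_PI_frac :
  \sum_(1 <= n < m.+1) t n ^+ 2 = 'C(k, 2)%:R ^+ 2 - 'C(k, 4)%:R *+ 2.
Proof.
rewrite -sum_tan2_PI_frac.
have [m1 | m_gt1] := eqVneq m 1.
  by rewrite /k m1 !big_nat1 bin_small // mul0rn subr0.
have m2 : (1 < m)%N by rewrite ltn_neqAle eq_sym m_gt1.
have c4 : P`_(m - 2) = 'C(k, 4)%:R.
  have := coefBP (m - 2); rewrite coefB -signr_odd oddB // addbF signr_odd.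
  move/(mulfI (sign_neq0 _)) => <-.
  have -> : ((m - 2).*2.+1 = k - 4)%N by rewrite /k; lia.
  by rewrite bin_sub // /k; lia.
have := @coefPn2_prod_XsubC _ rs; rewrite size_rs c4 !sum_rs => /(_ m2) ->.
by rewrite opprB addrC subrK.
Qed.

Lemma sum_cot2_PI_frac : \sum_(1 <= n < m.+1) (t n)^-1 = 'C(k, 3)%:R / k%:R.
Proof.
have rs0 : 0 \notin rs by apply/negP => /rs_gt0; rewrite ltxx.
have k0 : k%:R != 0 :> R by rewrite pnatr_eq0.
have := coefBP 1; rewrite coef1_prod_XsubC // sum_rs mulNr mulrN mulrA -coefBP.
rewrite !coefB expr1 expr0 mul1r bin1 mulN1r => /eqP; rewrite eqr_opp => /eqP ->.
by rewrite [k%:R * _]mulrC mulfK.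
Qed.

Lemma sum_sin_ratio_PI_frac :
  \sum_(1 <= n < k) sin_ratio (PI * INR n / INR k) =
  (k%:R ^+ 4 + 6 * k%:R ^+ 2 - 7) / 48.
Proof.
have k0 : k%:R != 0 :> R by rewrite pnatr_eq0.
rewrite sum_nat_reflect; last first.
  move=> n /andP[_ nm]; rewrite -sin_ratio_PI_sub; congr sin_ratio.
  rewrite minus_INR; last by rewrite /k; lia.
  by rewrite !INRE !RdivE !RmultE !RminusE; field; rewrite nat1r.
rewrite (eq_big_nat _ _ (F2 := fun n => (t n ^+ 2 + 3 * t n + 3 + (t n)^-1) / 16)); last first.
  move=> n /in_range[n0 nk]; have [s0 c0 _] := PI_frac_trig_gt0 n0 nk.
  exact: sin_ratio_tan (lt0r_neq0 s0) (lt0r_neq0 c0).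
rewrite -mulr_suml !big_split /= -mulr_sumr sumr_const_nat subn1 /=.
rewrite sum_tan4_PI_frac sum_tan2_PI_frac sum_cot2_PI_frac.
have binE j : 'C(k, j)%:R = (\prod_(i < j) (k%:R - i%:R)) / j`!%:R :> R.
  by rewrite -natr_bin_ffact mulfK // pnatr_eq0 -lt0n fact_gt0.
have mE : m%:R = (k%:R - 1) / 2 :> R.
  by rewrite /k -addn1 -muln2 natrD natrM; field.
rewrite !binE !big_ord_recr big_ord0 /= mE.
rewrite (_ : 2`! = 2)// (_ : 3`! = 6)// (_ : 4`! = 24)//.
by field.
Qed.
End OddMultiple.

Lemma sum_fE (f : nat -> R) s n : (s <= n)%N -> sum_f s n f = \sum_(s <= i < n.+1) f i.
Proof.
move=> sn; rewrite /sum_f sum_f_R0E -[in RHS](add0n s) big_addn.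
by rewrite subSn.
Qed.

Open Scope R_scope.

Theorem mainTheorem3 (k : nat) (hk : Nat.Odd k) :
  (if (k <=? 1)%nat then 0
   else sum_f 1 (k - 1)%coq_nat
          (fun n => (sin (PI * INR n / INR k)) ^ 2 / (sin (2 * PI * INR n / INR k)) ^ 4))
  = / 48 * ((INR k) ^ 4 + 6 * (INR k) ^ 2 - 7).
Proof.
case: Nat.leb_spec0 => [k_le1 | k_gt1].
  have -> : k = 1%N by case: hk => m; lia.
  by rewrite !RealsE /=; field.
have [m ->] : exists m, k = m.+1.*2.+1.
  by case: hk => [[|m] km]; [lia | exists m; rewrite km; lia].
rewrite sum_fE; last lia.
rewrite (_ : (m.+1.*2.+1 - 1)%coq_nat.+1 = m.+1.*2.+1); last lia.
rewrite (eq_bigr (fun n => sin_ratio (PI * INR n / INR m.+1.*2.+1))) => [|n _]; last first.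
  by rewrite /sin_ratio !RpowE /Rdiv !Rmult_assoc.
by rewrite sum_sin_ratio_PI_frac // !RealsE /= mulrC.
Qed.
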